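(* Let $M=(W,\bm{\Box},V)$ be a transitive neighborhood model and $\Sigma$ a set of formulas closed under subformulas. Then the transitive filtration $M^{T}_f=(W_f,\bm{\Box}^{T}_f,V_f)$ of $M$ through $\Sigma$ is transitive: $\bm{\Box}^{T}_fX\subseteq\bm{\Box}^{T}_f\bm{\Box}^{T}_fX$ for all $X\subseteq W_f$.
   Context: A neighborhood model is $M=(W,\bm{\Box},V)$ with $W\neq\varnothing$, $\bm{\Box}:\mathcal P(W)\to\mathcal P(W)$, $V:Var\to\mathcal P(W)$; truth sets: $|p|_M=V(p)$, $|\neg\varphi|_M=W\setminus|\varphi|_M$, $|\varphi\wedge\psi|_M=|\varphi|_M\cap|\psi|_M$, $|\Box\varphi|_M=\bm{\Box}|\varphi|_M$. $M$ is transitive if $\bm{\Box}X\subseteq\bm{\Box}\bm{\Box}X$ for all $X\subseteq W$. For $\Sigma$ closed under subformulas, $w\sim v$ iff $w,v$ satisfy the same formulas of $\Sigma$; $\widetilde w$ is the class of $w$, $W_f=\{\widetilde w:w\in W\}$, $\widetilde X=\{\widetilde w:w\in X\}$, $V_f(p)=\widetilde{|p|}_M$. The minimal filtration has $\bm{\Box}^{-}_fX=\widetilde{|\Box\varphi|}_M$ if $X=\widetilde{|\varphi|}_M$ for some formula $\Box\varphi\in\Sigma$, and $\bm{\Box}^{-}_fX=\varnothing$ otherwise. For a function $\bm{\Box}':\mathcal P(U)\to\mathcal P(U)$, $\widehat{\bm{\Box}'}X=X$ if $X=\bm{\Box}'Y$ for some $Y\subseteq U$, and $\varnothing$ otherwise.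 The transitive filtration is $M^{T}_f=(W_f,\bm{\Box}^{T}_f,V_f)$ with $\bm{\Box}^{T}_fX=\bm{\Box}^{-}_fX\cup\widehat{\bm{\Box}^{-}_f}X$. *)

Set Implicit Arguments.

Inductive form : Type :=
| fvar : nat -> form
| fneg : form -> form
| fand : form -> form -> form
| fbox : form -> form.

Record nmodel : Type := NModel {
  nW : Type;
  nW_inhabited : inhabited nW;
  nbox : (nW -> Prop) -> (nW -> Prop);
  nval : nat -> nW -> Prop
}.

Definition subset {T : Type} (A B : T -> Prop) : Prop := forall x, A x -> B x.

Fixpoint truth (M : nmodel) (phi : form) : nW M -> Prop :=
  match phi with
  | fvar p => nval M p
  | fneg a => fun w => ~ truth M a w
  | fand a b => fun w => truth M a w /\ truth M b w
  | fbox a => nbox M (truth M a)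
  end.

Definition transitive_box {U : Type} (B : (U -> Prop) -> (U -> Prop)) : Prop :=
  forall X : U -> Prop, subset (B X) (B (B X)).

Definition transitive_model (M : nmodel) : Prop := transitive_box (nbox M).

(* Sigma closed under (immediate, hence all) subformulas *)
Definition subformula_closed (Sigma : form -> Prop) : Prop :=
  (forall a, Sigma (fneg a) -> Sigma a) /\
  (forall a b, Sigma (fand a b) -> Sigma a /\ Sigma b) /\
  (forall a, Sigma (fbox a) -> Sigma a).

Section Filtration.
Variables (M : nmodel) (Sigma : form -> Prop).

Definition sim (w v : nW M) : Prop :=
  forall phi, Sigma phi -> (truth M phi w <-> truth M phi v).

Definition cls (w : nW M) : nW M -> Prop := sim w.

Definition Wf : Type := { C : nW M -> Prop | exists w, C = cls w }.

Definition tilde (X : nW M -> Prop) : Wf -> Prop :=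
  fun c => exists w, X w /\ proj1_sig c = cls w.

Definition Vf (p : nat) : Wf -> Prop := tilde (nval M p).

(* minimal filtration: Box^-_f X = |Box phi|~ if X = |phi|~ with Box phi in Sigma,
   and the empty set otherwise (well-definedness of the first case is a
   standard fact, so the case is written as an existential). *)
Definition box_min (X : Wf -> Prop) : Wf -> Prop :=
  fun c => exists phi, Sigma (fbox phi) /\ X = tilde (truth M phi)
                       /\ tilde (truth M (fbox phi)) c.

End Filtration.

Definition hat {U : Type} (B' : (U -> Prop) -> (U -> Prop)) (X : U -> Prop)
  : U -> Prop :=
  fun c => (exists Y, X = B' Y) /\ X c.

Definition box_T (M : nmodel) (Sigma : form -> Prop) (X : Wf M Sigma -> Prop)
  : Wf M Sigma -> Prop :=
  fun c => @box_min M Sigma X c \/ hat (@box_min M Sigma) X c.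
Arguments box_min M Sigma X c : clear implicits.
Arguments box_T M Sigma X c : clear implicits.

From Stdlib Require Import Classical FunctionalExtensionality PropExtensionality.

(* Every set Box^T_f X is already a value Box^-_f Y of the minimal filtration,
   so the hat clause yields Box^T_f X <= Box^T_f (Box^T_f X).  The only case
   needing transitivity of M is when X is both a value |Box phi|~ of Box^-_f
   and a set |psi|~ with Box psi in Sigma: as ~ separates the formulas of
   Sigma, |psi| = |Box phi|, so transitivity gives
   X <= |Box psi|~ = Box^-_f X, i.e. Box^T_f X = Box^-_f X. *)

Lemma pred_ext {T : Type} (A B : T -> Prop) : (forall x, A x <-> B x) -> A = B.
Proof.
  intro H; apply functional_extensionality; intro x.
  apply propositional_extensionality; auto.
Qed.

Lemma transitive_union_hat {U : Type} (B : (U -> Prop) -> U -> Prop) :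
  (forall X, exists Y, (fun c => B X c \/ hat B X c) = B Y) ->
  transitive_box (fun X c => B X c \/ hat B X c).
Proof.
  intros Hrange X c Hc.
  destruct (Hrange X) as [Y HY].
  right; split; [exists Y; exact HY | exact Hc].
Qed.

Section Filtration.
Variables (M : nmodel) (Sigma : form -> Prop).

Let tilde := @tilde M Sigma.
Let box_min := box_min M Sigma.

Definition class_of (w : nW M) : Wf M Sigma :=
  exist _ (cls M Sigma w) (ex_intro _ w eq_refl).

Lemma tilde_mono (A B : nW M -> Prop) : subset A B -> subset (tilde A) (tilde B).
Proof. intros HAB c [w [Hw Hc]]; exists w; auto. Qed.

Lemma tilde_truth_iff psi (c : Wf M Sigma) w :
  Sigma psi -> proj1_sig c = cls M Sigma w ->
  (tilde (truth M psi) c <-> truth M psi w).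
Proof.
  intros Hpsi Hc; split.
  - intros [v [Hv Hcv]].
    assert (Hwv : cls M Sigma w v) by (rewrite Hc in Hcv; rewrite Hcv; intros ? ?; tauto).
    apply (Hwv psi Hpsi); exact Hv.
  - intro Hw; exists w; auto.
Qed.

Lemma tilde_truth_inj psi psi' :
  Sigma psi -> Sigma psi' ->
  tilde (truth M psi) = tilde (truth M psi') -> truth M psi = truth M psi'.
Proof.
  intros Hpsi Hpsi' He; apply pred_ext; intro w.
  rewrite <- (tilde_truth_iff psi (class_of w) w Hpsi eq_refl).
  rewrite <- (tilde_truth_iff psi' (class_of w) w Hpsi' eq_refl).
  rewrite He; tauto.
Qed.

Hypothesis closed_Sigma : subformula_closed Sigma.

Lemma Sigma_fbox_inv {phi} : Sigma (fbox phi) -> Sigma phi.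
Proof. destruct closed_Sigma as [_ [_ Hbox]]; apply Hbox. Qed.

Lemma box_min_tilde psi :
  Sigma (fbox psi) -> box_min (tilde (truth M psi)) = tilde (truth M (fbox psi)).
Proof.
  intro Hpsi; apply pred_ext; intro c; split.
  - intros [phi [Hphi [He Hc]]].
    cbn [truth].
    rewrite (tilde_truth_inj psi phi (Sigma_fbox_inv Hpsi) (Sigma_fbox_inv Hphi) He).
    exact Hc.
  - intro Hc; exists psi; auto.
Qed.

Lemma box_min_inv Z c :
  box_min Z c -> exists phi, Sigma (fbox phi) /\ box_min Z = tilde (truth M (fbox phi)).
Proof.
  intros [phi [Hphi [HZ _]]].
  exists phi; split; [exact Hphi |].
  rewrite HZ; apply box_min_tilde; exact Hphi.
Qed.

Hypothesis trans_M : transitive_model M.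

Lemma box_min_inflationary Z psi :
  Sigma (fbox psi) -> box_min Z = tilde (truth M psi) ->
  subset (box_min Z) (box_min (box_min Z)).
Proof.
  intros Hpsi HZ c Hc.
  destruct (box_min_inv Z c Hc) as [phi [Hphi HZphi]].
  assert (Hpsi_phi : truth M psi = truth M (fbox phi)).
  { apply tilde_truth_inj; [exact (Sigma_fbox_inv Hpsi) | exact Hphi |].
    rewrite <- HZ; exact HZphi. }
  rewrite HZ, box_min_tilde by exact Hpsi.
  rewrite HZphi in Hc.
  revert Hc; apply tilde_mono.
  simpl; rewrite Hpsi_phi; apply trans_M.
Qed.

Lemma box_T_in_range_box_min X : exists Y, box_T M Sigma X = box_min Y.
Proof.
  destruct (classic (exists Z, X = box_min Z)) as [[Z HZ] | Hnot_range].
  - destruct (classic (exists psi, Sigma (fbox psi) /\ X = tilde (truth M psi)))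
      as [[psi [Hpsi HX]] | Hnot_tilde].
    + exists X; apply pred_ext; intro c; split; [| now left].
      intros [Hc | [_ Hc]]; [exact Hc |].
      subst X; apply (box_min_inflationary Z psi Hpsi HX); exact Hc.
    + (* Box^-_f X is empty here, so only the hat clause contributes. *)
      exists Z; rewrite <- HZ; apply pred_ext; intro c; split.
      * intros [[psi [Hpsi [HX _]]] | [_ Hc]]; [exfalso; eauto | exact Hc].
      * intro Hc; right; split; [exists Z |]; assumption.
  - exists X; apply pred_ext; intro c; split; [| now left].
    intros [Hc | [Hrange _]]; [exact Hc | contradiction].
Qed.

End Filtration.

Theorem mainTheorem7 (M : nmodel) (Sigma : form -> Prop) :
  transitive_model M -> subformula_closed Sigma ->
  forall X : Wf M Sigma -> Prop,
    subset (box_T M Sigma X) (box_T M Sigma (box_T M Sigma X)).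
Proof.
  intros trans_M closed_Sigma.
  apply transitive_union_hat.
  exact (box_T_in_range_box_min M Sigma closed_Sigma trans_M).
Qed.
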